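(* Let $(L,G,\mathcal D)$ be an abelian Chaplygin nonholonomic system as described in the context, with constraints $\phi^a(q,\dot q)=\dot s^a+A^a_\alpha(r)\dot r^\alpha=0$, $a=1,\dots,k<n$, where $q=(r,s)$. Suppose a nowhere-zero $f(r)\in C^1$ has been found satisfying $$\frac{\partial f}{\partial r^\delta}G_{\alpha\nu}+\frac{\partial f}{\partial r^\nu}G_{\alpha\delta}-2\frac{\partial f}{\partial r^\alpha}G_{\delta\nu}=f\big(K^\mu_{\alpha\delta}G_{\mu\nu}+K^\mu_{\alpha\nu}G_{\mu\delta}\big)\quad\text{for all }\alpha,\nu,\delta,$$ and let $\mathcal L(q,\omega):=L(q,\dot q=f\omega)$ and $\phi^a(q,\omega):=\phi^a(q,\dot q=f\omega)$. If the matrix $\widetilde g_{ab}:=\partial^2\mathcal L/\partial\omega^a\partial\omega^b$ (second derivatives with respect to the $s$-components of $\omega$) is invertible, then the nonholonomic mechanics of the original system can be derived from the equations $$\frac{d}{dt}\frac{\partial\mathcal L_V}{\partial\omega^I}-f\frac{\partial\mathcal L_V}{\partial q^I}=0,\qquad I=1,\dots,n,$$ with $\dot q=f\omega$, using the Lagrangian $$\mathcal L_V(q,\omega)=\mathcal L(q,\omega)-\frac1f\frac{\partial\mathcal L}{\partial\omega^a}\phi^a(q,\omega),$$ and imposing the nonholonomic constraints $\phi^a=0$ on the initial conditions.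
   Context: An abelian Chaplygin nonholonomic system: $Q$ of dimension $n$ with local coordinates $q=(r^\alpha,s^a)$, $\alpha=1,\dots,m=n-k$, $a=1,\dots,k$, a mechanical Lagrangian $L(r,\dot r,\dot s)$ not depending on $s$ (invariant under the abelian group $G$ acting by translations in $s$), and linear constraints $\dot s^a=-A^a_\alpha(r)\dot r^\alpha$; its nonholonomic mechanics are the Lagrange–d'Alembert equations for $L$ with these constraints. Write $g_{\alpha\beta},g_{a\alpha},g_{ab}$ for the coefficients of the kinetic energy in $L$ (so $L=\tfrac12g_{\alpha\beta}\dot r^\alpha\dot r^\beta+g_{a\alpha}\dot r^\alpha\dot s^a+\tfrac12g_{ab}\dot s^a\dot s^b-V(r)$). The constrained Lagrangian is $l_c(r,\dot r)=L(r,\dot r,-A\dot r)$; $G_{\alpha\beta}=\partial^2l_c/\partial\dot r^\alpha\partial\dot r^\beta$, assumed invertible with inverse $G^{\alpha\beta}$; $\mathcal B^a_{\alpha\beta}=\partial A^a_\alpha/\partial r^\beta-\partial A^a_\beta/\partial r^\alpha$; $M_{a\alpha}=g_{a\alpha}-g_{ab}A^b_\alpha$; $K^\gamma_{\beta\alpha}=M_{b\epsilon}G^{\epsilon\gamma}\mathcal B^b_{\beta\alpha}$. Quasivelocities $\omega$ are defined by $\dot q=f(r)\omega$ (componentwise for all $n$ coordinates); the time reparameterization is $d\tau=f\,dt$. Summation convention. *)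

From HB Require Import structures.
From mathcomp Require Import all_boot all_order all_algebra.
From mathcomp Require Import all_classical all_reals all_analysis.
Set Implicit Arguments. Unset Strict Implicit. Unset Printing Implicit Defensive.
Import Order.TTheory GRing.Theory Num.Theory.
Import numFieldNormedType.Exports.
Local Open Scope ring_scope.
Local Open Scope classical_set_scope.

Definition ev (R : realType) (p : nat) (i : 'I_p) : 'rV[R]_p := delta_mx 0 i.

Definition pd (R : realType) (p : nat) (F : 'rV[R]_p -> R) (i : 'I_p)
  (x : 'rV[R]_p) : R := 'D_(ev R i) F x.

Section Chaplygin.
Variables (R : realType) (m k : nat).

(* Data of an abelian Chaplygin system in coordinates q = (r, s),
   r in R^m, s in R^k: kinetic coefficients g_{alpha beta}, g_{a alpha},
   g_{ab}, potential V(r), constraint coefficients A^a_alpha(r). *)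
Record chap_data := ChapData {
  gRR : 'rV[R]_m -> 'M[R]_m;
  gSR : 'rV[R]_m -> 'M[R]_(k, m);
  gSS : 'rV[R]_m -> 'M[R]_k;
  pot : 'rV[R]_m -> R;
  Acon : 'rV[R]_m -> 'M[R]_(k, m)
}.

Variable D : chap_data.

Definition Lag (r : 'rV[R]_m) (s : 'rV[R]_k) (rd : 'rV[R]_m) (sd : 'rV[R]_k) : R :=
  2^-1 * (\sum_(al < m) \sum_(be < m) gRR D r al be * rd 0 al * rd 0 be)
  + (\sum_(a < k) \sum_(al < m) gSR D r a al * rd 0 al * sd 0 a)
  + 2^-1 * (\sum_(a < k) \sum_(b < k) gSS D r a b * sd 0 a * sd 0 b)
  - pot D r.

Definition phi (r : 'rV[R]_m) (rd : 'rV[R]_m) (sd : 'rV[R]_k) (a : 'I_k) : R :=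
  sd 0 a + \sum_(al < m) Acon D r a al * rd 0 al.

Definition lc (r : 'rV[R]_m) (rd : 'rV[R]_m) : R :=
  Lag r 0 rd (- (rd *m (Acon D r)^T)).

(* G_{alpha beta}(r) = d^2 l_c / d rdot^alpha d rdot^beta
   (l_c is quadratic in rdot, so this is evaluated at rdot = 0) *)
Definition Gmat (r : 'rV[R]_m) : 'M[R]_m :=
  \matrix_(al, be) pd (fun v => pd (lc r) al v) be 0.

Definition Bc (r : 'rV[R]_m) (a : 'I_k) (al be : 'I_m) : R :=
  pd (fun x => Acon D x a al) be r - pd (fun x => Acon D x a be) al r.

Definition Mc (r : 'rV[R]_m) (a : 'I_k) (al : 'I_m) : R :=
  gSR D r a al - \sum_(b < k) gSS D r a b * Acon D r b al.

Definition Kc (r : 'rV[R]_m) (ga be al : 'I_m) : R :=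
  \sum_(b < k) \sum_(ep < m) Mc r b ep * invmx (Gmat r) ep ga * Bc r b be al.

Definition f_condition (f : 'rV[R]_m -> R) (r : 'rV[R]_m) (al nu de : 'I_m) : Prop :=
  pd f de r * Gmat r al nu + pd f nu r * Gmat r al de
    - 2 * pd f al r * Gmat r de nu
  = f r * ((\sum_(mu < m) Kc r mu al de * Gmat r mu nu)
           + \sum_(mu < m) Kc r mu al nu * Gmat r mu de).

Variable f : 'rV[R]_m -> R.

Definition LagW (r : 'rV[R]_m) (s : 'rV[R]_k) (wr : 'rV[R]_m) (ws : 'rV[R]_k) : R :=
  Lag r s (f r *: wr) (f r *: ws).

Definition phiW (r : 'rV[R]_m) (wr : 'rV[R]_m) (ws : 'rV[R]_k) (a : 'I_k) : R :=
  phi r (f r *: wr) (f r *: ws) a.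

Definition LV (r : 'rV[R]_m) (s : 'rV[R]_k) (wr : 'rV[R]_m) (ws : 'rV[R]_k) : R :=
  LagW r s wr ws
  - (f r)^-1 * \sum_(a < k) pd (fun w => LagW r s wr w) a ws * phiW r wr ws a.

Definition gtilde (r : 'rV[R]_m) (s : 'rV[R]_k) (wr : 'rV[R]_m) (ws : 'rV[R]_k)
  : 'M[R]_k :=
  \matrix_(a, b) pd (fun w => pd (fun w' => LagW r s wr w') a w) b ws.

Definition omR (rc : R -> 'rV[R]_m) (t : R) : 'rV[R]_m := (f (rc t))^-1 *: derive1 rc t.
Definition omS (rc : R -> 'rV[R]_m) (sc : R -> 'rV[R]_k) (t : R) : 'rV[R]_k :=
  (f (rc t))^-1 *: derive1 sc t.

Definition LV_equations (I : set R) (rc : R -> 'rV[R]_m) (sc : R -> 'rV[R]_k) : Prop :=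
  forall t, I t ->
    (forall al : 'I_m,
       derive1 (fun u => pd (fun w => LV (rc u) (sc u) w (omS rc sc u)) al (omR rc u)) t
       - f (rc t) * pd (fun x => LV x (sc t) (omR rc t) (omS rc sc t)) al (rc t) = 0)
    /\
    (forall b : 'I_k,
       derive1 (fun u => pd (fun w => LV (rc u) (sc u) (omR rc u) w) b (omS rc sc u)) t
       - f (rc t) * pd (fun y => LV (rc t) y (omR rc t) (omS rc sc t)) b (sc t) = 0).

End Chaplygin.

Section NH.
Variables (R : realType) (m k : nat) (D : chap_data R m k).

(* nonholonomic mechanics on the time set I: the constraints phi^a = 0 and the
   Lagrange-d'Alembert equations
   d/dt dL/dqdot^I - dL/dq^I = lambda_a dphi^a/dqdot^I with multipliers lambda *)
Definition nonholonomic (I : set R) (rc : R -> 'rV[R]_m) (sc : R -> 'rV[R]_k) : Prop :=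
  (forall t, I t -> forall a, phi D (rc t) (derive1 rc t) (derive1 sc t) a = 0) /\
  exists lam : 'I_k -> R -> R, forall t, I t ->
    (forall al : 'I_m,
       derive1 (fun u => pd (fun v => Lag D (rc u) (sc u) v (derive1 sc u)) al (derive1 rc u)) t
       - pd (fun x => Lag D x (sc t) (derive1 rc t) (derive1 sc t)) al (rc t)
       = \sum_(a < k) lam a t * pd (fun v => phi D (rc t) v (derive1 sc t) a) al (derive1 rc t))
    /\
    (forall b : 'I_k,
       derive1 (fun u => pd (fun w => Lag D (rc u) (sc u) (derive1 rc u) w) b (derive1 sc u)) t
       - pd (fun y => Lag D (rc t) y (derive1 rc t) (derive1 sc t)) b (sc t)
       = \sum_(a < k) lam a t * pd (fun w => phi D (rc t) (derive1 rc t) w a) b (derive1 sc t)).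

Definition data_regular (U : set 'rV[R]_m) : Prop :=
  forall r, U r ->
    (gRR D r)^T = gRR D r /\ (gSS D r)^T = gSS D r /\
    (forall i j, differentiable (fun x => gRR D x i j) r) /\
    (forall i j, differentiable (fun x => gSR D x i j) r) /\
    (forall i j, differentiable (fun x => gSS D x i j) r) /\
    (forall i j, differentiable (fun x => Acon D x i j) r) /\
    differentiable (pot D) r.

End NH.

Definition C1_on (R : realType) (p : nat) (U : set 'rV[R]_p) (F : 'rV[R]_p -> R) : Prop :=
  forall r, U r -> differentiable F r /\
    forall i, pd F i x @[x --> r] --> pd F i r.

From HB Require Import structures.
From mathcomp Require Import all_boot all_order all_algebra.
From mathcomp Require Import all_classical all_reals all_analysis.
From mathcomp Require Import ring.
Import Order.TTheory GRing.Theory Num.Theory.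
Import numFieldNormedType.Exports.
Set Implicit Arguments. Unset Printing Implicit Defensive.
Local Open Scope ring_scope.
Local Open Scope classical_set_scope.

(* Everything is quadratic in the velocities.  With [p_alpha], [p_a] the momenta of [L]
   and [T] its kinetic energy, in quasivelocities [L_V = f^2 (T - p_a phi^a) - V]; hence
   [dL_V/domega^a = - f^2 g_ab phi^b] and [L_V] does not depend on [s], so the
   [s]-equations of [L_V] say that [f g_ab phi^b] is conserved.  It vanishes at [t0] and
   [g_ab = tilde g_ab / f^2] is invertible, so the constraints hold at all times.
   On the constraints, the [s]-equations of Lagrange-d'Alembert fix the multipliers
   [lambda_a = d p_a / dt], and the [r]-equations of [L_V] are [f] times the remaining
   [r]-equations: the extra terms [(df/dt) (G rdot)_alpha - 2 (df/dr^alpha) T] equal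
   [f p_a B^a_{alpha beta} rdot^beta], which is the condition on [f] contracted twice
   with [rdot]. *)

Section PointwiseDeriveRules.
Variables (R : realType) (V : normedModType R).
Implicit Types (F G : V -> R) (x v : V) (c dF dG : R).

Lemma is_derive_add F G x v dF dG : is_derive x v F dF -> is_derive x v G dG ->
  is_derive x v (fun y => F y + G y) (dF + dG).
Proof. exact: is_deriveD. Qed.

Lemma is_derive_sub F G x v dF dG : is_derive x v F dF -> is_derive x v G dG ->
  is_derive x v (fun y => F y - G y) (dF - dG).
Proof. exact: is_deriveB. Qed.

Lemma is_derive_opp F x v dF : is_derive x v F dF ->
  is_derive x v (fun y => - F y) (- dF).
Proof. exact: is_deriveN. Qed.

Lemma is_derive_mul F G x v dF dG : is_derive x v F dF -> is_derive x v G dG ->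
  is_derive x v (fun y => F y * G y) (F x * dG + G x * dF).
Proof. exact: is_deriveM. Qed.

Lemma is_derive_bigsum n (F : 'I_n -> V -> R) x v (dF : 'I_n -> R) :
  (forall i, is_derive x v (F i) (dF i)) ->
  is_derive x v (fun y => \sum_(i < n) F i y) (\sum_(i < n) dF i).
Proof.
move=> dFi; have := is_derive_sum dFi.
by rewrite (_ : \sum_(i < n) F i = (fun y => \sum_(i < n) F i y)) // funeqE => y; rewrite fct_sumE.
Qed.

Lemma is_derive_cmul c G x v dG : is_derive x v G dG ->
  is_derive x v (fun y => c * G y) (c * dG).
Proof. by move=> dG'; have := is_derive_mul (is_derive_cst c x v) dG'; rewrite mulr0 addr0. Qed.

Lemma is_derive_mulc c G x v dG : is_derive x v G dG ->
  is_derive x v (fun y => G y * c) (dG * c).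
Proof. by move=> dG'; have := is_derive_mul dG' (is_derive_cst c x v); rewrite mulr0 add0r mulrC. Qed.

Lemma is_derive_cadd c G x v dG : is_derive x v G dG ->
  is_derive x v (fun y => c + G y) dG.
Proof. by move=> dG'; have := is_derive_add (is_derive_cst c x v) dG'; rewrite add0r. Qed.

Lemma is_derive_addc c G x v dG : is_derive x v G dG ->
  is_derive x v (fun y => G y + c) dG.
Proof. by move=> dG'; have := is_derive_add dG' (is_derive_cst c x v); rewrite addr0. Qed.

Lemma is_derive_subc c G x v dG : is_derive x v G dG ->
  is_derive x v (fun y => G y - c) dG.
Proof. by move=> dG'; have := is_derive_sub dG' (is_derive_cst c x v); rewrite subr0. Qed.

End PointwiseDeriveRules.

Lemma sum_delta (R : realType) n (F : 'I_n -> R) i : \sum_(j < n) F j * (j == i)%:R = F i.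
Proof. by rewrite (bigD1 i) //= eqxx mulr1 big1 ?addr0 // => j /negPf ->; rewrite mulr0. Qed.

Lemma pdE (R : realType) p (F : 'rV[R]_p -> R) i x dF :
  is_derive x (ev R i) F dF -> pd F i x = dF.
Proof. by move=> dF'; rewrite /pd derive_val. Qed.

Section RowVectorForms.
Variables (R : realType) (p : nat).
Implicit Types (x v w : 'rV[R]_p).

Lemma ev_entry (i j : 'I_p) : ev R i 0 j = (j == i)%:R.
Proof. by rewrite /ev mxE eqxx. Qed.

Lemma is_derive_coord x v j : is_derive x v (fun y : 'rV[R]_p => y 0 j) (v 0 j).
Proof.
have did : derivable (@id 'rV[R]_p) x v by exact: derivable_id.
apply: DeriveDef; first exact: (derivable_mxP _ _ _).1 did 0 j.
by have := derive_mx did; rewrite derive_id => /matrixP/(_ 0 j); rewrite mxE.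
Qed.

Lemma is_derive_coord_ev w i j :
  is_derive w (ev R i) (fun y : 'rV[R]_p => y 0 j) (j == i)%:R.
Proof. by rewrite -ev_entry; exact: is_derive_coord. Qed.

Lemma is_derive_linear_form (c : 'I_p -> R) w i :
  is_derive w (ev R i) (fun y : 'rV[R]_p => \sum_(j < p) c j * y 0 j) (c i).
Proof.
apply: is_derive_eq; last exact: sum_delta.
by apply: is_derive_bigsum => j; apply: is_derive_cmul; exact: is_derive_coord_ev.
Qed.

Lemma is_derive_quadratic_form (c : 'I_p -> 'I_p -> R) w i :
  is_derive w (ev R i)
    (fun y : 'rV[R]_p => \sum_(j < p) \sum_(l < p) c j l * y 0 j * y 0 l)
    (\sum_(l < p) (c i l + c l i) * w 0 l).
Proof.
apply: is_derive_eq.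
  apply: is_derive_bigsum => j; apply: is_derive_bigsum => l.
  by apply: is_derive_mul; [apply: is_derive_cmul|]; exact: is_derive_coord_ev.
under eq_bigr do rewrite big_split /= sum_delta.
rewrite big_split /=; under [RHS]eq_bigr do rewrite mulrDl.
rewrite big_split /= addrC; congr (_ + _).
rewrite exchange_big /=; apply: eq_bigr => l _.
by under eq_bigr do rewrite mulrA; rewrite sum_delta mulrC.
Qed.

Lemma is_derive_bilinear_l q (c : 'I_q -> 'I_p -> R) (z : 'rV[R]_q) w i :
  is_derive w (ev R i)
    (fun y : 'rV[R]_p => \sum_(a < q) \sum_(j < p) c a j * y 0 j * z 0 a)
    (\sum_(a < q) c a i * z 0 a).
Proof.
apply: is_derive_eq.
  apply: is_derive_bigsum => a; apply: is_derive_bigsum => j.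
  by apply: is_derive_mulc; apply: is_derive_cmul; exact: is_derive_coord_ev.
by apply: eq_bigr => a _; rewrite -mulr_suml sum_delta.
Qed.

Lemma is_derive_bilinear_r q (c : 'I_p -> 'I_q -> R) (z : 'rV[R]_q) w i :
  is_derive w (ev R i)
    (fun y : 'rV[R]_p => \sum_(a < p) \sum_(j < q) c a j * z 0 j * y 0 a)
    (\sum_(j < q) c i j * z 0 j).
Proof.
apply: is_derive_eq.
  apply: is_derive_bigsum => a; apply: is_derive_bigsum => j.
  by apply: is_derive_cmul; exact: is_derive_coord_ev.
by under eq_bigr do rewrite -mulr_suml; rewrite sum_delta.
Qed.

End RowVectorForms.

Ltac derive_poly := repeat first
  [ apply: is_derive_cst | apply: is_derive_quadratic_form
  | apply: is_derive_bilinear_l | apply: is_derive_bilinear_r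
  | apply: is_derive_linear_form | apply: is_derive_coord_ev | apply: is_derive_coord
  | apply: is_derive_cmul | apply: is_derive_mulc
  | apply: is_derive_cadd | apply: is_derive_addc | apply: is_derive_subc
  | apply: is_derive_bigsum => ? | apply: is_derive_add | apply: is_derive_sub
  | apply: is_derive_opp | apply: is_derive_mul | apply: derivableP ].

Lemma half_symmetrized_sum (R : realType) n (M : 'M[R]_n) (w : 'rV[R]_n) i :
  M^T = M -> 2^-1 * \sum_(j < n) (M i j + M j i) * w 0 j = \sum_(j < n) M i j * w 0 j.
Proof.
move=> symM; rewrite mulr_sumr; apply: eq_bigr => j _.
have -> : M j i = M i j by rewrite -[in LHS]symM mxE.
by field.
Qed.

Section ChaplyginMomenta.
Variables (R : realType) (m k : nat) (D : chap_data R m k).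
Implicit Types (r : 'rV[R]_m) (s : 'rV[R]_k) (rd : 'rV[R]_m) (sd : 'rV[R]_k) (c : R).

Definition momR r rd sd (al : 'I_m) : R :=
  \sum_(be < m) gRR D r al be * rd 0 be + \sum_(a < k) gSR D r a al * sd 0 a.

Definition momS r rd sd (a : 'I_k) : R :=
  \sum_(al < m) gSR D r a al * rd 0 al + \sum_(b < k) gSS D r a b * sd 0 b.

Definition kin r rd sd : R :=
  2^-1 * (\sum_(al < m) \sum_(be < m) gRR D r al be * rd 0 al * rd 0 be)
  + (\sum_(a < k) \sum_(al < m) gSR D r a al * rd 0 al * sd 0 a)
  + 2^-1 * (\sum_(a < k) \sum_(b < k) gSS D r a b * sd 0 a * sd 0 b).

Definition kin_dr r rd sd (ga : 'I_m) : R :=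
  2^-1 * (\sum_(al < m) \sum_(be < m) pd (fun x => gRR D x al be) ga r * rd 0 al * rd 0 be)
  + (\sum_(a < k) \sum_(al < m) pd (fun x => gSR D x a al) ga r * rd 0 al * sd 0 a)
  + 2^-1 * (\sum_(a < k) \sum_(b < k) pd (fun x => gSS D x a b) ga r * sd 0 a * sd 0 b).

Lemma LagE r s rd sd : Lag D r s rd sd = kin r rd sd - pot D r.
Proof. by []. Qed.

Lemma pd_Lag_rdot r s rd sd al : (gRR D r)^T = gRR D r ->
  pd (fun v => Lag D r s v sd) al rd = momR r rd sd al.
Proof.
move=> symR; apply: pdE; apply: is_derive_eq; first by rewrite /Lag; derive_poly.
by rewrite half_symmetrized_sum.
Qed.

Lemma pd_Lag_sdot r s rd sd b : (gSS D r)^T = gSS D r ->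
  pd (fun w => Lag D r s rd w) b sd = momS r rd sd b.
Proof.
move=> symS; apply: pdE; apply: is_derive_eq; first by rewrite /Lag; derive_poly.
by rewrite half_symmetrized_sum.
Qed.

Lemma pd_Lag_s r s rd sd b : pd (fun y => Lag D r y rd sd) b s = 0.
Proof. by apply: pdE; exact: is_derive_cst. Qed.

Lemma pd_Lag_r r s rd sd al :
  (forall i j, differentiable (fun x => gRR D x i j) r) ->
  (forall i j, differentiable (fun x => gSR D x i j) r) ->
  (forall i j, differentiable (fun x => gSS D x i j) r) ->
  differentiable (pot D) r ->
  pd (fun x => Lag D x s rd sd) al r = kin_dr r rd sd al - pd (pot D) al r.
Proof.
move=> dRR dSR dSS dV; apply: pdE; rewrite /Lag.
by derive_poly; exact: diff_derivable.
Qed.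

Lemma pd_phi_rdot r rd sd a al : pd (fun v => phi D r v sd a) al rd = Acon D r a al.
Proof. by apply: pdE; rewrite /phi; derive_poly. Qed.

Lemma pd_phi_sdot r rd sd a b : pd (fun w => phi D r rd w a) b sd = (a == b)%:R.
Proof. by apply: pdE; rewrite /phi; derive_poly. Qed.

Lemma momR_scale r c rd sd al : momR r (c *: rd) (c *: sd) al = c * momR r rd sd al.
Proof.
rewrite /momR mulrDr !mulr_sumr.
by congr (_ + _); apply: eq_bigr => i _; rewrite mxE; ring.
Qed.

Lemma momS_scale r c rd sd a : momS r (c *: rd) (c *: sd) a = c * momS r rd sd a.
Proof.
rewrite /momS mulrDr !mulr_sumr.
by congr (_ + _); apply: eq_bigr => i _; rewrite mxE; ring.
Qed.

Lemma phi_scale r c rd sd a : phi D r (c *: rd) (c *: sd) a = c * phi D r rd sd a.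
Proof.
rewrite /phi mulrDr !mulr_sumr mxE.
by congr (_ + _); apply: eq_bigr => i _; rewrite mxE; ring.
Qed.

Lemma kin_scale r c rd sd : kin r (c *: rd) (c *: sd) = c * c * kin r rd sd.
Proof.
rewrite /kin !mulrDr !mulr_sumr.
by congr (_ + _ + _); rewrite ?mulr_sumr; apply: eq_bigr => i _;
  rewrite ?mulr_sumr; apply: eq_bigr => j _; rewrite !mxE; ring.
Qed.

Lemma kin_dr_scale r c rd sd ga : kin_dr r (c *: rd) (c *: sd) ga = c * c * kin_dr r rd sd ga.
Proof.
rewrite /kin_dr !mulrDr !mulr_sumr.
by congr (_ + _ + _); rewrite ?mulr_sumr; apply: eq_bigr => i _;
  rewrite ?mulr_sumr; apply: eq_bigr => j _; rewrite !mxE; ring.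
Qed.

End ChaplyginMomenta.

Section QuasivelocityLagrangian.
Variables (R : realType) (m k : nat) (D : chap_data R m k) (f : 'rV[R]_m -> R).
Implicit Types (r : 'rV[R]_m) (s : 'rV[R]_k) (wr : 'rV[R]_m) (ws : 'rV[R]_k).

Definition LV_quad r wr ws : R :=
  f r * f r * (kin D r wr ws - \sum_(a < k) momS D r wr ws a * phi D r wr ws a) - pot D r.

Lemma LagWE r s wr ws : LagW D f r s wr ws = f r * f r * kin D r wr ws - pot D r.
Proof. by rewrite /LagW LagE kin_scale. Qed.

Lemma pd_LagW_ws r s wr ws a : (gSS D r)^T = gSS D r ->
  pd (fun w => LagW D f r s wr w) a ws = f r * f r * momS D r wr ws a.
Proof.
move=> symS; under [fun w => _]funext do rewrite LagWE.
apply: pdE; apply: is_derive_eq; first by rewrite /kin; derive_poly.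
by rewrite half_symmetrized_sum.
Qed.

Lemma LVE r s wr ws : (gSS D r)^T = gSS D r -> LV D f r s wr ws = LV_quad r wr ws.
Proof.
move=> symS; rewrite /LV /LV_quad LagWE.
under eq_bigr do rewrite pd_LagW_ws // /phiW phi_scale.
have [->|f0] := eqVneq (f r) 0; first by rewrite invr0 !mul0r subr0.
have -> : \sum_(a < k) f r * f r * momS D r wr ws a * (f r * phi D r wr ws a)
    = f r * (f r * f r * \sum_(a < k) momS D r wr ws a * phi D r wr ws a).
  by rewrite !mulr_sumr; apply: eq_bigr => a _; ring.
by rewrite mulKf //; ring.
Qed.

Lemma pd_LV_wr r s wr ws al : (gRR D r)^T = gRR D r -> (gSS D r)^T = gSS D r ->
  pd (fun w => LV D f r s w ws) al wr = f r * f r * (momR D r wr ws al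
     - \sum_(a < k) (momS D r wr ws a * Acon D r a al + phi D r wr ws a * gSR D r a al)).
Proof.
move=> symR symS; under [fun w => _]funext do rewrite LVE //.
apply: pdE; apply: is_derive_eq; first by rewrite /LV_quad /kin; derive_poly.
by rewrite half_symmetrized_sum.
Qed.

Lemma pd_LV_ws r s wr ws b : (gSS D r)^T = gSS D r ->
  pd (fun w => LV D f r s wr w) b ws
  = - (f r * f r) * \sum_(a < k) phi D r wr ws a * gSS D r a b.
Proof.
move=> symS; under [fun w => _]funext do rewrite LVE //.
apply: pdE; apply: is_derive_eq; first by rewrite /LV_quad /kin; derive_poly.
rewrite half_symmetrized_sum //; cbv beta; rewrite big_split /= sum_delta.
by rewrite [X in _ * (X - _)](_ : _ = momS D r wr ws b) //; ring.
Qed.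

Lemma pd_LV_s r s wr ws b : pd (fun y => LV D f r y wr ws) b s = 0.
Proof.
rewrite (_ : (fun y => LV D f r y wr ws) = fun _ => LV D f r s wr ws) //.
by apply: pdE; exact: is_derive_cst.
Qed.

Lemma pd_LV_r r s wr ws al (U : set 'rV[R]_m) :
  open U -> U r -> data_regular D U -> differentiable f r ->
  (forall a, phi D r wr ws a = 0) ->
  pd (fun x => LV D f x s wr ws) al r =
  f r * f r * (kin_dr D r wr ws al - \sum_(a < k) momS D r wr ws a *
       \sum_(be < m) pd (fun x => Acon D x a be) al r * wr 0 be)
  + (f r * pd f al r + f r * pd f al r) * kin D r wr ws - pd (pot D) al r.
Proof.
move=> oU Ur regD df phi0.
(* [LV = LV_quad] needs [g_ab] symmetric, so it only holds near [r], inside [U]. *)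
have [_ [_ [dRR [dSR [dSS [dA dV]]]]]] := regD r Ur.
rewrite /pd (near_eq_derive _ (g := fun x => LV_quad x wr ws)); last first.
  near=> x; have Ux : U x by near: x; exact: open_nbhs_nbhs.
  by rewrite LVE //; have [_ []] := regD x Ux.
apply: (@pdE _ _ (fun x => LV_quad x wr ws)); apply: is_derive_eq.
  by rewrite /LV_quad /kin; derive_poly; exact: diff_derivable.
cbv beta; rewrite (_ : phi D r wr ws = fun _ => 0); last exact/funext.
have sum_mul0l n (F : 'I_n -> R) : \sum_(i < n) 0 * F i = 0.
  by rewrite big1 // => i _; rewrite mul0r.
have sum_mul0r n (F : 'I_n -> R) : \sum_(i < n) F i * 0 = 0.
  by rewrite big1 // => i _; rewrite mulr0.
rewrite big_split /= sum_mul0l sum_mul0r.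
by rewrite /kin_dr /kin /pd; ring.
Unshelve. all: by end_near.
Qed.

Lemma gtildeE r s wr ws : (gSS D r)^T = gSS D r ->
  gtilde D f r s wr ws = (f r * f r) *: gSS D r.
Proof.
move=> symS; apply/matrixP => a b; rewrite !mxE.
under [fun w => _]funext do rewrite pd_LagW_ws //.
by apply: pdE; apply: is_derive_eq; first (rewrite /momS; derive_poly).
Qed.

End QuasivelocityLagrangian.

Section MatrixEntries.
Variable R : realType.

Lemma mx_entryD p q (X Y : 'M[R]_(p, q)) i j : (X + Y) i j = X i j + Y i j.
Proof. by rewrite mxE. Qed.

Lemma mx_entryN p q (X : 'M[R]_(p, q)) i j : (- X) i j = - X i j.
Proof. by rewrite mxE. Qed.

Lemma mx_entryB p q (X Y : 'M[R]_(p, q)) i j : (X - Y) i j = X i j - Y i j.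
Proof. by rewrite !mxE. Qed.

Lemma mx_entryT p q (X : 'M[R]_(p, q)) i j : X^T j i = X i j.
Proof. by rewrite mxE. Qed.

Lemma row_mulmxE p q (x : 'rV[R]_p) (M : 'M[R]_(p, q)) j :
  (x *m M) 0 j = \sum_(i < p) M i j * x 0 i.
Proof. by rewrite mxE; apply: eq_bigr => i _; rewrite mulrC. Qed.

Lemma bilinear_mxE p q (M : 'M[R]_(p, q)) (x : 'rV[R]_p) (y : 'rV[R]_q) :
  (x *m M *m y^T) 0 0 = \sum_(i < p) \sum_(j < q) M i j * x 0 i * y 0 j.
Proof.
rewrite mxE; under eq_bigr do rewrite mx_entryT row_mulmxE mulr_suml.
by rewrite exchange_big.
Qed.

End MatrixEntries.

Section ConstrainedAlgebra.
Variables (R : realType) (m k : nat) (D : chap_data R m k).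
Implicit Types (r : 'rV[R]_m) (rd v : 'rV[R]_m).

Definition sdot_constr r rd : 'rV[R]_k := - (rd *m (Acon D r)^T).

Definition Gconstr r : 'M[R]_m := gRR D r - (gSR D r)^T *m Acon D r
  - (Acon D r)^T *m gSR D r + (Acon D r)^T *m gSS D r *m Acon D r.

Lemma sdot_constrE r rd sd : (forall a, phi D r rd sd a = 0) -> sd = sdot_constr r rd.
Proof.
move=> phi0; apply/matrixP => i a; rewrite ord1 /sdot_constr mx_entryN row_mulmxE.
move: (phi0 a); rewrite /phi => /eqP; rewrite addr_eq0 => /eqP ->.
by congr (- _); apply: eq_bigr => j _; rewrite mx_entryT.
Qed.

Lemma kin_mx r rd sd : kin D r rd sd = 2^-1 * (rd *m gRR D r *m rd^T) 0 0
  + (sd *m gSR D r *m rd^T) 0 0 + 2^-1 * (sd *m gSS D r *m sd^T) 0 0.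
Proof.
rewrite !bilinear_mxE /kin; congr (_ + _ + _).
by apply: eq_bigr => a _; apply: eq_bigr => i _; ring.
Qed.

Lemma kin_constr r rd : kin D r rd (sdot_constr r rd) = 2^-1 * (rd *m Gconstr r *m rd^T) 0 0.
Proof.
rewrite kin_mx /sdot_constr /Gconstr.
set A := Acon D r; set S := gSR D r; set Q := gSS D r.
have -> : (- (rd *m A^T)) *m S *m rd^T = - (rd *m A^T *m S *m rd^T) by rewrite !mulNmx.
have -> : (- (rd *m A^T)) *m Q *m (- (rd *m A^T))^T = rd *m A^T *m Q *m A *m rd^T.
  by rewrite !mulNmx linearN /= mulmxN opprK trmx_mul trmxK !mulmxA.
have cross : (rd *m S^T *m A *m rd^T) 0 0 = (rd *m A^T *m S *m rd^T) 0 0.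
  by rewrite -[RHS]mx_entryT !trmx_mul !trmxK !mulmxA.
rewrite !(mulmxDr, mulmxDl, mulmxN, mulNmx) !mulmxA !(mx_entryD, mx_entryN) cross.
by field.
Qed.

Lemma Gconstr_sym r : (gRR D r)^T = gRR D r -> (gSS D r)^T = gSS D r ->
  (Gconstr r)^T = Gconstr r.
Proof.
move=> symR symS; rewrite /Gconstr !linearD /= !linearN /= !trmx_mul !trmxK symR symS.
by rewrite !mulmxA; congr (_ + _); exact: addrAC.
Qed.

Lemma GmatE r : (gRR D r)^T = gRR D r -> (gSS D r)^T = gSS D r -> Gmat D r = Gconstr r.
Proof.
move=> symR symS; apply/matrixP => al be; rewrite mxE.
have lcE : lc D r = fun v => 2^-1 * \sum_(i < m) \sum_(j < m) Gconstr r i j * v 0 i * v 0 j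
                             - pot D r.
  by apply/funext => v; rewrite /lc LagE -/(sdot_constr r v) kin_constr bilinear_mxE.
have -> : (fun v => pd (lc D r) al v)
          = fun v => 2^-1 * \sum_(j < m) (Gconstr r al j + Gconstr r j al) * v 0 j.
  by apply/funext => v; rewrite lcE; apply: pdE; derive_poly.
apply: pdE; apply: is_derive_eq; first by derive_poly.
by rewrite -(@mx_entryT _ _ _ (Gconstr r) be al) Gconstr_sym //; field.
Qed.

Lemma momR_mx r rd sd al : momR D r rd sd al = (rd *m (gRR D r)^T + sd *m gSR D r) 0 al.
Proof.
rewrite mx_entryD !row_mulmxE /momR.
by congr (_ + _); apply: eq_bigr => i _; rewrite ?mx_entryT mulrC.
Qed.

Lemma momS_mx r rd sd a : momS D r rd sd a = (rd *m (gSR D r)^T + sd *m (gSS D r)^T) 0 a.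
Proof.
rewrite mx_entryD !row_mulmxE /momS.
by congr (_ + _); apply: eq_bigr => i _; rewrite ?mx_entryT mulrC.
Qed.

(* On the constraints, [p_alpha - p_a A^a_alpha] is the momentum of [l_c]. *)
Lemma momentum_constr r rd al :
  momR D r rd (sdot_constr r rd) al
    - \sum_(a < k) momS D r rd (sdot_constr r rd) a * Acon D r a al
  = \sum_(be < m) Gconstr r al be * rd 0 be.
Proof.
have -> : \sum_(a < k) momS D r rd (sdot_constr r rd) a * Acon D r a al =
   ((rd *m (gSR D r)^T + sdot_constr r rd *m (gSS D r)^T) *m Acon D r) 0 al.
  by rewrite row_mulmxE; apply: eq_bigr => a _; rewrite momS_mx mulrC.
rewrite momR_mx -mx_entryB.
have -> : rd *m (gRR D r)^T + sdot_constr r rd *m gSR D r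
    - (rd *m (gSR D r)^T + sdot_constr r rd *m (gSS D r)^T) *m Acon D r = rd *m (Gconstr r)^T.
  rewrite /sdot_constr /Gconstr !linearD /= !linearN /= !trmx_mul !trmxK.
  by rewrite !(mulmxDr, mulmxDl, mulmxN, mulNmx) !mulmxA opprD opprK addrA.
by rewrite row_mulmxE; apply: eq_bigr => be _; rewrite mx_entryT.
Qed.

Lemma momS_constr r rd a :
  momS D r rd (sdot_constr r rd) a = \sum_(ga < m) Mc D r a ga * rd 0 ga.
Proof.
rewrite momS_mx.
have -> : rd *m (gSR D r)^T + sdot_constr r rd *m (gSS D r)^T
          = rd *m (gSR D r - gSS D r *m Acon D r)^T.
  by rewrite /sdot_constr linearD /= linearN /= trmx_mul mulmxDr mulmxN mulNmx mulmxA.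
rewrite row_mulmxE; apply: eq_bigr => ga _.
by rewrite mx_entryT mx_entryB mxE.
Qed.

Lemma kin_constr_quad r rd : 2 * kin D r rd (sdot_constr r rd)
  = \sum_(i < m) \sum_(j < m) Gconstr r i j * rd 0 i * rd 0 j.
Proof. by rewrite kin_constr bilinear_mxE; field. Qed.

Lemma Kc_contract r (al be ga : 'I_m) : Gmat D r \in unitmx ->
  \sum_(mu < m) Kc D r mu al be * Gmat D r mu ga = \sum_(b < k) Mc D r b ga * Bc D r b al be.
Proof.
move=> Gu; rewrite /Kc.
have inv ep : \sum_(mu < m) invmx (Gmat D r) ep mu * Gmat D r mu ga = (ep == ga)%:R.
  by have := mulVmx Gu => /matrixP/(_ ep ga); rewrite !mxE.
under eq_bigr do rewrite mulr_suml.
rewrite exchange_big /=; apply: eq_bigr => b _.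
under eq_bigr do rewrite mulr_suml.
rewrite exchange_big /= (eq_bigr (fun ep => Mc D r b ep * Bc D r b al be * (ep == ga)%:R)).
  exact: sum_delta.
by move=> ep _; rewrite -inv mulr_sumr; apply: eq_bigr => mu _; ring.
Qed.

Lemma Kc_quadratic r v al : Gmat D r \in unitmx ->
  \sum_(de < m) \sum_(nu < m) ((\sum_(mu < m) Kc D r mu al de * Gmat D r mu nu)
       + \sum_(mu < m) Kc D r mu al nu * Gmat D r mu de) * v 0 de * v 0 nu
  = 2 * \sum_(a < k) (\sum_(ga < m) Mc D r a ga * v 0 ga)
                     * (\sum_(be < m) Bc D r a al be * v 0 be).
Proof.
move=> Gu.
set W := \sum_(ga < m) \sum_(be < m) \sum_(a < k)
           Mc D r a ga * Bc D r a al be * v 0 ga * v 0 be.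
have -> : \sum_(a < k) (\sum_(ga < m) Mc D r a ga * v 0 ga)
            * (\sum_(be < m) Bc D r a al be * v 0 be) = W.
  under eq_bigr do rewrite big_distrlr /=.
  rewrite exchange_big /=; apply: eq_bigr => ga _.
  by rewrite exchange_big /=; apply: eq_bigr => be _; apply: eq_bigr => a _; ring.
transitivity (W + W); last by ring.
rewrite -[X in X + _]exchange_big -big_split /=; apply: eq_bigr => de _.
rewrite -big_split /=; apply: eq_bigr => nu _.
rewrite !Kc_contract // -[in RHS]big_split -[in LHS]big_split /= !mulr_suml.
by apply: eq_bigr => a _; ring.
Qed.

Lemma f_condition_quadratic (f : 'rV[R]_m -> R) r v al : Gmat D r \in unitmx ->
  (forall nu de, f_condition D f r al nu de) ->
  (\sum_(ga < m) pd f ga r * v 0 ga) * (\sum_(nu < m) Gmat D r al nu * v 0 nu)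
  - pd f al r * (\sum_(be < m) \sum_(ga < m) Gmat D r be ga * v 0 be * v 0 ga)
  = f r * \sum_(a < k) (\sum_(ga < m) Mc D r a ga * v 0 ga)
                       * (\sum_(be < m) Bc D r a al be * v 0 be).
Proof.
move=> Gu fc; set G := Gmat D r.
set Q := \sum_(be < m) \sum_(ga < m) G be ga * v 0 be * v 0 ga.
pose df ga := pd f ga r * v 0 ga; pose Gv nu := G al nu * v 0 nu.
pose cond de nu := pd f de r * G al nu + pd f nu r * G al de - 2 * pd f al r * G de nu.
have lhs : \sum_(de < m) \sum_(nu < m) cond de nu * v 0 de * v 0 nu
  = 2 * ((\sum_(ga < m) df ga) * (\sum_(nu < m) Gv nu) - pd f al r * Q).
  have -> : 2 * ((\sum_(ga < m) df ga) * (\sum_(nu < m) Gv nu) - pd f al r * Q)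
    = (\sum_(de < m) \sum_(nu < m) df de * Gv nu) + (\sum_(de < m) \sum_(nu < m) df nu * Gv de)
      - 2 * pd f al r * Q.
    have -> : (\sum_(ga < m) df ga) * (\sum_(nu < m) Gv nu)
              = \sum_(de < m) \sum_(nu < m) df de * Gv nu.
      by rewrite mulr_suml; apply: eq_bigr => de _; rewrite mulr_sumr.
    by rewrite [X in _ = _ + X - _]exchange_big /=; ring.
  rewrite /Q mulr_sumr -big_split -sumrB; apply: eq_bigr => de _.
  by rewrite mulr_sumr -big_split -sumrB; apply: eq_bigr => nu _; rewrite /df /Gv /cond /=; ring.
have rhs : \sum_(de < m) \sum_(nu < m) cond de nu * v 0 de * v 0 nu
  = f r * (2 * \sum_(a < k) (\sum_(ga < m) Mc D r a ga * v 0 ga)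
                           * (\sum_(be < m) Bc D r a al be * v 0 be)).
  rewrite -Kc_quadratic // mulr_sumr; apply: eq_bigr => de _.
  by rewrite mulr_sumr; apply: eq_bigr => nu _; rewrite /cond fc; ring.
have two_neq0 : (2 : R) != 0 by rewrite pnatr_eq0.
apply: (mulfI two_neq0).
by rewrite mulrCA -rhs lhs.
Qed.

End ConstrainedAlgebra.

Section CurveCalculus.
Variable R : realType.

Lemma derivable_comp_curve p (G : 'rV[R]_p -> R) (c : R -> 'rV[R]_p) t :
  differentiable G (c t) -> differentiable c t -> derivable (fun u => G (c u)) t 1.
Proof. by move=> dG dc; apply: diff_derivable; exact: differentiable_comp. Qed.

Lemma derivable_curve_coord p (c : R -> 'rV[R]_p) t i :
  differentiable c t -> derivable (fun u => c u 0 i) t 1.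
Proof.
by move=> dc; apply: (@derivable_comp_curve p (fun y => y 0 i)) => //; exact: differentiable_coord.
Qed.

Lemma derive1_comp_curve p (G : 'rV[R]_p -> R) (c : R -> 'rV[R]_p) t :
  differentiable G (c t) -> differentiable c t ->
  'D_1 (fun u => G (c u)) t = \sum_(i < p) pd G i (c t) * derive1 c t 0 i.
Proof.
move=> dG dc; rewrite deriveE; last exact: differentiable_comp.
rewrite (diff_comp dc dG) /= derive1E (deriveE (f := c)) //.
rewrite [in LHS](row_sum_delta ('d c t 1)) linear_sum; apply: eq_bigr => i _.
by rewrite linearZ /= /pd /ev (deriveE (f := G)) // mulrC.
Qed.

Lemma derive1_eq0_const (h : R -> R) (I : set R) : is_interval I ->
  (forall t, I t -> derivable h t 1 /\ 'D_1 h t = 0) ->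
  forall t0 t, I t0 -> I t -> h t = h t0.
Proof.
move=> iI h'0.
have ordered a b : a <= b -> I a -> I b -> h b = h a.
  move=> ab Ia Ib; have inI x : a <= x <= b -> I x by exact: iI.
  have dh x : x \in `]a, b[%R -> is_derive x 1 h 0.
    rewrite in_itv /= => /andP[ax xb].
    by have [? ?] := h'0 x (inI x ltac:(by rewrite !ltW)); exact: DeriveDef.
  have ch : {within `[a, b], continuous h}.
    apply: continuous_in_subspaceT => x; rewrite inE /= in_itv /= => xab.
    have [hx _] := h'0 x (inI x xab).
    exact/differentiable_continuous/derivable1_diffP.
  have [c _ hba] := MVT_segment ab dh ch.
  by apply/eqP; rewrite -subr_eq0 hba mul0r.
move=> t0 t It0 It; case: (leP t0 t) => [le|/ltW le]; first exact: ordered.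
exact/esym/ordered.
Qed.

End CurveCalculus.

Lemma rearrange_residual (R : comNzRingType) k (F X DL dF Pc Kn dFal : R)
    (p Y A dA SdA SB : 'I_k -> R) :
  (forall a, dA a - SdA a = SB a) ->
  dF * Pc - dFal * (2 * Kn) = F * \sum_(a < k) p a * SB a ->
  (F * (X - \sum_(a < k) (p a * dA a + A a * Y a)) + Pc * dF)
    - (F * DL - F * \sum_(a < k) p a * SdA a + 2 * dFal * Kn)
  = F * (X - DL - \sum_(a < k) Y a * A a).
Proof.
move=> dAE fcond; rewrite big_split /=.
have -> : \sum_(a < k) p a * dA a = \sum_(a < k) p a * SdA a + \sum_(a < k) p a * SB a.
  by rewrite -big_split; apply: eq_bigr => a _ /=; rewrite -dAE; ring.
have -> : \sum_(a < k) A a * Y a = \sum_(a < k) Y a * A a.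
  by apply: eq_bigr => a _; exact: mulrC.
rewrite (_ : Pc * dF = dFal * (2 * Kn) + F * \sum_(a < k) p a * SB a); last by rewrite -fcond; ring.
ring.
Qed.

Definition on_constraints (R : realType) m k (D : chap_data R m k) (I : set R)
    (rc : R -> 'rV[R]_m) (sc : R -> 'rV[R]_k) : Prop :=
  forall t, I t -> forall a, phi D (rc t) (derive1 rc t) (derive1 sc t) a = 0.

Section Trajectory.
Variables (R : realType) (m k : nat) (D : chap_data R m k).
Variables (U : set 'rV[R]_m) (f : 'rV[R]_m -> R) (I : set R).
Variables (rc : R -> 'rV[R]_m) (sc : R -> 'rV[R]_k).
Hypotheses (oU : open U) (oI : open I) (regD : data_regular D U).
Hypothesis f_diff : forall r, U r -> differentiable f r.
Hypothesis f_neq0 : forall r, U r -> f r != 0.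
Hypothesis rc_U : forall t, I t -> U (rc t).
Hypothesis rc_diff : forall t, I t -> differentiable rc t.
Hypothesis rdot_diff : forall t, I t -> differentiable (derive1 rc) t.
Hypothesis sdot_diff : forall t, I t -> differentiable (derive1 sc) t.
Hypothesis fcond : forall t, I t -> forall al nu de, f_condition D f (rc t) al nu de.
Hypothesis G_unit : forall t, I t -> Gmat D (rc t) \in unitmx.

Local Notation rdot := (derive1 rc).
Local Notation sdot := (derive1 sc).
Local Notation pR u := (momR D (rc u) (rdot u) (sdot u)).
Local Notation pS u := (momS D (rc u) (rdot u) (sdot u)).
Local Notation ph u := (phi D (rc u) (rdot u) (sdot u)).

Lemma near_I t : I t -> \forall u \near t, I u.
Proof. by move=> It; apply: open_nbhs_nbhs. Qed.

Lemma derivable_along (G : 'rV[R]_m -> R) t : I t -> differentiable G (rc t) ->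
  derivable (fun u => G (rc u)) t 1.
Proof. by move=> It dG; exact: derivable_comp_curve (rc_diff It). Qed.

Lemma derivable_momR t al : I t -> derivable (fun u => pR u al) t 1.
Proof.
move=> It; have [_ [_ [dRR [dSR _]]]] := regD (rc_U It).
apply: (@ex_derive _ _ _ _ _ _ _ _); rewrite /momR; derive_poly.
- exact: derivable_along It (dRR _ _).
- exact: derivable_curve_coord (rdot_diff It).
- exact: derivable_along It (dSR _ _).
- exact: derivable_curve_coord (sdot_diff It).
Qed.

Lemma derivable_momS t a : I t -> derivable (fun u => pS u a) t 1.
Proof.
move=> It; have [_ [_ [_ [dSR [dSS _]]]]] := regD (rc_U It).
apply: (@ex_derive _ _ _ _ _ _ _ _); rewrite /momS; derive_poly.
- exact: derivable_along It (dSR _ _).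
- exact: derivable_curve_coord (rdot_diff It).
- exact: derivable_along It (dSS _ _).
- exact: derivable_curve_coord (sdot_diff It).
Qed.

Lemma derivable_phi t a : I t -> derivable (fun u => ph u a) t 1.
Proof.
move=> It; have [_ [_ [_ [_ [_ [dA _]]]]]] := regD (rc_U It).
apply: (@ex_derive _ _ _ _ _ _ _ _); rewrite /phi; derive_poly.
- exact: derivable_curve_coord (sdot_diff It).
- exact: derivable_along It (dA _ _).
- exact: derivable_curve_coord (rdot_diff It).
Qed.

Lemma phiW_quasivel t a : I t -> phiW D f (rc t) (omR f rc t) (omS f rc sc t) a = ph t a.
Proof.
move=> It; rewrite /phiW /omR /omS !scalerA mulfV ?scale1r //.
exact: f_neq0 (rc_U It).
Qed.

Lemma pd_LV_wr_along t al : I t ->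
  pd (fun w => LV D f (rc t) (sc t) w (omS f rc sc t)) al (omR f rc t)
  = f (rc t) * (pR t al
      - \sum_(a < k) (pS t a * Acon D (rc t) a al + ph t a * gSR D (rc t) a al)).
Proof.
move=> It; have [symR [symS _]] := regD (rc_U It).
rewrite pd_LV_wr // /omR /omS momR_scale.
under eq_bigr do rewrite momS_scale phi_scale -!mulrA -mulrDr.
by rewrite -mulr_sumr; have := f_neq0 (rc_U It); set F := f (rc t) => F0; field.
Qed.

Lemma pd_LV_ws_along t b : I t ->
  pd (fun w => LV D f (rc t) (sc t) (omR f rc t) w) b (omS f rc sc t)
  = - (f (rc t) * \sum_(a < k) ph t a * gSS D (rc t) a b).
Proof.
move=> It; have [_ [symS _]] := regD (rc_U It).
rewrite pd_LV_ws // /omR /omS; under eq_bigr do rewrite phi_scale -mulrA.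
by rewrite -mulr_sumr; have := f_neq0 (rc_U It); set F := f (rc t) => F0; field.
Qed.

Lemma pd_LV_r_along t al : I t -> (forall a, ph t a = 0) ->
  f (rc t) * pd (fun x => LV D f x (sc t) (omR f rc t) (omS f rc sc t)) al (rc t)
  = f (rc t) * (kin_dr D (rc t) (rdot t) (sdot t) al - pd (pot D) al (rc t))
    - f (rc t) * \sum_(a < k) pS t a
        * \sum_(be < m) pd (fun x => Acon D x a be) al (rc t) * rdot t 0 be
    + 2 * pd f al (rc t) * kin D (rc t) (rdot t) (sdot t).
Proof.
move=> It phi0.
rewrite (pd_LV_r _ _ _ al oU (rc_U It) regD (f_diff (rc_U It))); last first.
  by move=> a; rewrite /omR /omS phi_scale phi0 mulr0.
rewrite /omR /omS kin_dr_scale kin_scale.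
under eq_bigr => a _.
  rewrite momS_scale; under eq_bigr => be _ do rewrite mxE mulrCA.
  rewrite -mulr_sumr mulrACA.
  over.
by rewrite -mulr_sumr; have := f_neq0 (rc_U It); set F := f (rc t) => F0; field.
Qed.

Lemma pd_Lag_r_along t al : I t ->
  pd (fun x => Lag D x (sc t) (rdot t) (sdot t)) al (rc t)
  = kin_dr D (rc t) (rdot t) (sdot t) al - pd (pot D) al (rc t).
Proof. by move=> It; have [_ [_ [? [? [? [_ ?]]]]]] := regD (rc_U It); exact: pd_Lag_r. Qed.

Lemma derive_momR_Lag t al : I t ->
  derive1 (fun u => pd (fun v => Lag D (rc u) (sc u) v (sdot u)) al (rdot u)) t
  = 'D_1 (fun u => pR u al) t.
Proof.
move=> It; rewrite derive1E; apply: near_eq_derive.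
near=> u; have Iu : I u by near: u; exact: near_I.
by have [symR _] := regD (rc_U Iu); rewrite pd_Lag_rdot.
Unshelve. all: by end_near.
Qed.

Lemma derive_momS_Lag t b : I t ->
  derive1 (fun u => pd (fun w => Lag D (rc u) (sc u) (rdot u) w) b (sdot u)) t
  = 'D_1 (fun u => pS u b) t.
Proof.
move=> It; rewrite derive1E; apply: near_eq_derive.
near=> u; have Iu : I u by near: u; exact: near_I.
by have [_ [symS _]] := regD (rc_U Iu); rewrite pd_Lag_sdot.
Unshelve. all: by end_near.
Qed.

Definition ld_residual t al : R :=
  'D_1 (fun u => pR u al) t - (kin_dr D (rc t) (rdot t) (sdot t) al - pd (pot D) al (rc t))
  - \sum_(a < k) 'D_1 (fun u => pS u a) t * Acon D (rc t) a al.

(* The Lagrange-d'Alembert equations in [s] force the multipliers [lambda_a = d p_a / dt]. *)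
Lemma nonholonomicE : nonholonomic D I rc sc <->
  on_constraints D I rc sc /\ forall t, I t -> forall al, ld_residual t al = 0.
Proof.
split=> [[Cs [lam eqs]] | [Cs res]].
  split=> // t It al; have [eq_r eq_s] := eqs t It.
  have lamE a : lam a t = 'D_1 (fun u => pS u a) t.
    have := eq_s a; rewrite derive_momS_Lag // pd_Lag_s subr0 => ->.
    by under eq_bigr do rewrite pd_phi_sdot; rewrite sum_delta.
  have := eq_r al; under eq_bigr do rewrite pd_phi_rdot lamE.
  by rewrite derive_momR_Lag // pd_Lag_r_along // => eq_r'; rewrite /ld_residual eq_r' subrr.
split=> //; exists (fun a t => 'D_1 (fun u => pS u a) t) => t It; split=> [al | b].
  rewrite derive_momR_Lag // pd_Lag_r_along //; under eq_bigr do rewrite pd_phi_rdot.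
  by apply/eqP; rewrite -subr_eq0; apply/eqP; exact: res.
rewrite derive_momS_Lag // pd_Lag_s subr0.
by under eq_bigr do rewrite pd_phi_sdot; rewrite sum_delta.
Qed.

Definition constraint_momentum (b : 'I_k) (u : R) : R :=
  f (rc u) * \sum_(a < k) ph u a * gSS D (rc u) a b.

Lemma derivable_constraint_momentum t b : I t -> derivable (constraint_momentum b) t 1.
Proof.
move=> It; have [_ [_ [_ [_ [dSS _]]]]] := regD (rc_U It).
have dph a := derivableP (derivable_phi a It).
have dg a := derivableP (derivable_along It (dSS a b)).
exact: (@ex_derive _ _ _ _ _ _ _ (is_derive_mul
  (derivableP (derivable_along It (f_diff (rc_U It))))
  (@is_derive_bigsum R _ k (fun a y => ph y a * gSS D (rc y) a b) t 1 _
     (fun a => is_derive_mul (dph a) (dg a))))).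
Qed.

Lemma LV_s_equationE t b : I t ->
  derive1 (fun u => pd (fun w => LV D f (rc u) (sc u) (omR f rc u) w) b (omS f rc sc u)) t
    - f (rc t) * pd (fun y => LV D f (rc t) y (omR f rc t) (omS f rc sc t)) b (sc t)
  = - 'D_1 (constraint_momentum b) t.
Proof.
move=> It; rewrite derive1E [in LHS](near_eq_derive (g := fun u => - constraint_momentum b u)).
  rewrite [X in _ - _ * X]pd_LV_s mulr0 subr0.
  have dcm := is_derive_opp (derivableP (derivable_constraint_momentum b It)).
  by rewrite (@derive_val _ _ _ _ _ _ _ dcm).
near=> u; have Iu : I u by near: u; exact: near_I.
exact: pd_LV_ws_along.
Unshelve. all: by end_near.
Qed.

Lemma LV_momentum_on_constraints t al : on_constraints D I rc sc -> I t ->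
  derive1 (fun u => pd (fun w => LV D f (rc u) (sc u) w (omS f rc sc u)) al (omR f rc u)) t
  = 'D_1 (fun u => f (rc u) * (pR u al - \sum_(a < k) pS u a * Acon D (rc u) a al)) t.
Proof.
move=> Cs It; rewrite derive1E; apply: near_eq_derive.
near=> u; have Iu : I u by near: u; exact: near_I.
rewrite pd_LV_wr_along //; congr (_ * (_ - _)); apply: eq_bigr => a _.
by rewrite Cs // mul0r addr0.
Unshelve. all: by end_near.
Qed.

Lemma f_condition_along t al : on_constraints D I rc sc -> I t ->
  'D_1 (fun u => f (rc u)) t * (pR t al - \sum_(a < k) pS t a * Acon D (rc t) a al)
    - pd f al (rc t) * (2 * kin D (rc t) (rdot t) (sdot t))
  = f (rc t) * \sum_(a < k) pS t a * \sum_(be < m) Bc D (rc t) a al be * rdot t 0 be.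
Proof.
move=> Cs It; have [symR [symS _]] := regD (rc_U It).
rewrite (@sdot_constrE R m k D _ _ _ (Cs t It)) momentum_constr kin_constr_quad -GmatE //.
under [in RHS]eq_bigr do rewrite momS_constr.
rewrite derive1_comp_curve; first exact: f_condition_quadratic (G_unit It) (fcond It al).
  exact: f_diff (rc_U It).
exact: rc_diff.
Qed.

Lemma LV_r_equationE t al : on_constraints D I rc sc -> I t ->
  derive1 (fun u => pd (fun w => LV D f (rc u) (sc u) w (omS f rc sc u)) al (omR f rc u)) t
    - f (rc t) * pd (fun x => LV D f x (sc t) (omR f rc t) (omS f rc sc t)) al (rc t)
  = f (rc t) * ld_residual t al.
Proof.
move=> Cs It; have [_ [_ [_ [_ [_ [dA _]]]]]] := regD (rc_U It).
rewrite LV_momentum_on_constraints // pd_LV_r_along //; last exact: Cs.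
have df := derivable_along It (f_diff (rc_U It)).
have dpA a := is_derive_mul (derivableP (derivable_momS a It))
                            (derivableP (derivable_along It (dA a al))).
rewrite (@derive_val _ _ _ _ _ _ _ (is_derive_mul (derivableP df) (is_derive_sub
  (derivableP (derivable_momR al It))
  (@is_derive_bigsum R _ k (fun a u => pS u a * Acon D (rc u) a al) t 1 _ dpA)))).
apply: rearrange_residual; last exact: f_condition_along.
move=> a; cbv beta; rewrite (derive1_comp_curve (dA a al) (rc_diff It)) -sumrB.
by apply: eq_bigr => be _; rewrite /Bc mulrBl.
Qed.

Lemma LV_equationsE : on_constraints D I rc sc ->
  LV_equations D f I rc sc <-> forall t, I t -> forall al, ld_residual t al = 0.
Proof.
move=> Cs; split=> [LVe t It al | res t It].
  have [eq_r _] := LVe t It; move: (eq_r al); rewrite LV_r_equationE //.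
  by move/eqP; rewrite mulf_eq0 (negbTE (f_neq0 (rc_U It))) => /eqP.
split=> [al | b]; first by rewrite LV_r_equationE // res // mulr0.
rewrite LV_s_equationE // (near_eq_derive (g := fun=> 0)) ?derive_cst ?oppr0 //.
near=> u; have Iu : I u by near: u; exact: near_I.
by rewrite /constraint_momentum big1 ?mulr0 // => a _; rewrite Cs // mul0r.
Unshelve. all: by end_near.
Qed.

Lemma constraint_momentum_eq0 t0 : is_interval I -> I t0 -> LV_equations D f I rc sc ->
  (forall a, ph t0 a = 0) -> forall t, I t -> forall b, constraint_momentum b t = 0.
Proof.
move=> iI It0 LVe ph0 t It b.
rewrite (derive1_eq0_const (h := constraint_momentum b) iI _ _ _ It0 It).
  by rewrite /constraint_momentum big1 ?mulr0 // => a _; rewrite ph0 mul0r.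
move=> u Iu; split; first exact: derivable_constraint_momentum.
have [_ eq_s] := LVe u Iu; move: (eq_s b); rewrite LV_s_equationE //.
by move/eqP; rewrite oppr_eq0 => /eqP.
Qed.

Lemma on_constraints_of_LV t0 : is_interval I -> I t0 ->
  (forall r s wr ws, U r -> gtilde D f r s wr ws \in unitmx) ->
  LV_equations D f I rc sc -> (forall a, ph t0 a = 0) -> on_constraints D I rc sc.
Proof.
move=> iI It0 gt_unit LVe ph0 t It a.
have [_ [symS _]] := regD (rc_U It).
have fU := f_neq0 (rc_U It).
have gSS_unit : gSS D (rc t) \in unitmx.
  have := gt_unit (rc t) (sc t) (omR f rc t) (omS f rc sc t) (rc_U It).
  by rewrite gtildeE // unitmxZ // unitfE mulf_neq0.
pose phi_row : 'rV[R]_k := \row_a ph t a.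
have : phi_row *m gSS D (rc t) = 0.
  apply/matrixP => i b; rewrite ord1 !mxE.
  have := constraint_momentum_eq0 iI It0 LVe ph0 It b.
  rewrite /constraint_momentum => /eqP; rewrite mulf_eq0 (negbTE fU) /= => /eqP cm0.
  by rewrite -[RHS]cm0; apply: eq_bigr => a' _; rewrite /phi_row mxE.
move/(congr1 (mulmx^~ (invmx (gSS D (rc t))))); rewrite mulmxK // mul0mx.
by move/matrixP/(_ 0 a); rewrite !mxE.
Qed.

End Trajectory.

Theorem theorem7 (R : realType) (m k : nat) (D : chap_data R m k)
  (U : set 'rV[R]_m) (f : 'rV[R]_m -> R) :
  (k < m + k)%N ->
  open U ->
  data_regular D U ->
  C1_on U f ->
  (forall r, U r -> f r != 0) ->
  (forall r, U r -> Gmat D r \in unitmx) ->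
  (forall r, U r -> forall al nu de : 'I_m, f_condition D f r al nu de) ->
  (forall r s wr ws, U r -> gtilde D f r s wr ws \in unitmx) ->
  forall (I : set R) (t0 : R) (rc : R -> 'rV[R]_m) (sc : R -> 'rV[R]_k),
    open I -> is_interval I -> I t0 ->
    (forall t, I t -> U (rc t) /\
       differentiable rc t /\ differentiable (derive1 rc) t /\
       differentiable sc t /\ differentiable (derive1 sc) t) ->
    (nonholonomic D I rc sc <->
       (LV_equations D f I rc sc /\
        forall a : 'I_k, phiW D f (rc t0) (omR f rc t0) (omS f rc sc t0) a = 0)).
Proof.
move=> _ oU regD C1f f_neq0 G_unit fcond gt_unit I t0 rc sc oI iI It0 curve.
have f_diff r (Ur : U r) := (C1f r Ur).1.
have rc_U t (It : I t) := (curve t It).1.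
have rc_diff t (It : I t) := (curve t It).2.1.
have rdot_diff t (It : I t) := (curve t It).2.2.1.
have sdot_diff t (It : I t) := (curve t It).2.2.2.2.
have fcond_rc t (It : I t) := fcond _ (rc_U t It).
have G_unit_rc t (It : I t) := G_unit _ (rc_U t It).
have LVE := LV_equationsE oU oI regD f_diff f_neq0 rc_U rc_diff rdot_diff sdot_diff
  fcond_rc G_unit_rc.
have phiW0E a := phiW_quasivel D U f I rc sc f_neq0 rc_U t0 a It0.
rewrite (nonholonomicE rc sc oI regD rc_U).
split=> [[Cs res] | [LVe phiW0]].
  by split=> [|a]; [exact/LVE | rewrite phiW0E; exact: Cs].
have Cs : on_constraints D I rc sc.
  apply: (on_constraints_of_LV oI regD f_diff f_neq0 rc_U rc_diff rdot_diff sdot_diff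
            t0 iI It0 gt_unit LVe).
  by move=> a; rewrite -phiW0E.
by split=> //; exact/(LVE Cs).
Qed.
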